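(* In the FIND setting of the context, let $\mathcal C_r$ and $\mathcal C_s$ be leaf clusters of $\mathcal T$, choose consistent orderings of $\mathcal T_r^+$ and $\mathcal T_s^+$, and let $\boldsymbol\Sigma_{r,g}$, $\boldsymbol\Sigma_{s,g}$ denote the matrices produced by the elimination process for target $r$ and target $s$ respectively. Then for every cluster $\mathcal C_i$ that is a node of both $\mathcal T_r^+$ and $\mathcal T_s^+$, $$\boldsymbol\Sigma_{r,i}(\mathcal S_i\cup\mathcal B_i,\mathcal S_i\cup\mathcal B_i)=\boldsymbol\Sigma_{s,i}(\mathcal S_i\cup\mathcal B_i,\mathcal S_i\cup\mathcal B_i).$$
   Context: Setting (FIND). $\mathcal M$ is a finite set of mesh nodes; $\mathbf A$ is an invertible complex matrix indexed by $\mathcal M\times\mathcal M$, structurally symmetric ($A_{ij}\neq0\iff A_{ji}\neq0$); distinct nodes $i,j$ are connected if $A_{ij}\neq 0$. $\boldsymbol\Sigma$ is a complex matrix indexed by $\mathcal M\times\mathcal M$ with $\Sigma_{ij}=0$ whenever $i\neq j$ and $i,j$ are not connected. Matrices are indexed by $\mathcal M$ itself (the ordering only determines the sequence of eliminations). $\dagger$ is conjugate transpose, $\mathbf X^{-\dagger}=(\mathbf X^{-1})^\dagger$. $\mathbf X(X,Y)$ is the submatrix with rows in $X$, columns in $Y$. For a cluster $\mathcal C\subseteq\mathcal M$: boundary set $\mathcal B_{\mathcal C}=\{i\in\mathcal C: A_{ij}\neq 0\text{ for some } j\notin\mathcal C\}$, inner set $\mathcal I_{\mathcal C}=\mathcal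 C\setminus\mathcal B_{\mathcal C}$; for $\mathcal C_g$ write $\mathcal B_g,\mathcal I_g$. Cluster tree: $\mathcal T$ is a rooted binary tree of clusters with root $\mathcal M$, each non-leaf cluster the disjoint union of its two children. For a leaf $\mathcal C_r$ with path $r=a_0,\dots,a_d$ (root) and $b_k$ the sibling of $a_k$, the augmented tree $\mathcal T_r^+$ has root $\mathcal C_{-r}=\mathcal M\setminus\mathcal C_r$; for $0\le k\le d-2$, $\mathcal C_{-a_k}=\mathcal M\setminus\mathcal C_{a_k}$ has children $\mathcal C_{b_k}$ and $\mathcal C_{-a_{k+1}}$, with $\mathcal C_{-a_{d-1}}$ identified with $\mathcal C_{b_{d-1}}$; each basic cluster $\mathcal C_{b_k}$ carries its subtree from $\mathcal T$. (A node's subtree is determined by the node, so a cluster common to two augmented trees has the same subtree in both.) Private inner nodes: $\mathcal S_g=\mathcal I_g$ for a leaf $g$ of an augmented tree; $\mathcal S_g=\mathcal I_g\setminus(\mathcal I_i\cup\mathcal I_j)$ if $g$ has children $i,j$. Consistent ordering: a total order $g_1,\dots,g_m$ of the nodes of $\mathcal T_r^+$ with every node after all its descendants. Elimination for target $r$: $\mathbf A_{r,g_1}=\mathbf A$, $\boldsymbol\Sigma_{r,g_1}=\boldsymbol\Sigma$; for each $g$ (with $\mathbf A_{r,g}(\mathcal S_g,\mathcal S_g)$ invertible), $\mathcal L_g=\mathbf A_{r,g}(\mathcal B_g,\mathcal S_g)\mathbf A_{r,g}(\mathcal S_g,\mathcal S_g)^{-1}$, $\mathbf L_g$ is the identity on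 $\mathcal M$ except $\mathbf L_g(\mathcal B_g,\mathcal S_g)=\mathcal L_g$, $\mathbf A_{r,g+}=\mathbf L_g^{-1}\mathbf A_{r,g}$, $\boldsymbol\Sigma_{r,g+}=\mathbf L_g^{-1}\boldsymbol\Sigma_{r,g}\mathbf L_g^{-\dagger}$, and $\mathbf A_{r,g_{t+1}}=\mathbf A_{r,g_t+}$, $\boldsymbol\Sigma_{r,g_{t+1}}=\boldsymbol\Sigma_{r,g_t+}$. Thus $\boldsymbol\Sigma_{r,i}$ is the matrix just before eliminating $\mathcal S_i$. *)

From mathcomp Require Import all_boot all_order all_algebra.
Set Implicit Arguments. Unset Strict Implicit. Unset Printing Implicit Defensive.
Import Order.TTheory GRing.Theory Num.Theory.
Local Open Scope ring_scope.

Section FIND.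
Variables (C : numClosedFieldType) (n : nat).
Local Notation node := 'I_n.

Inductive ctree :=
| CLeaf of {set node}
| CNode of {set node} & ctree & ctree.

Definition clus (t : ctree) : {set node} :=
  match t with CLeaf X => X | CNode X _ _ => X end.

Fixpoint wf_ctree (t : ctree) : bool :=
  match t with
  | CLeaf X => X != set0
  | CNode X l r => [&& X == clus l :|: clus r, [disjoint clus l & clus r],
                     wf_ctree l & wf_ctree r]
  end.

Fixpoint subtrees (t : ctree) : seq ctree :=
  t :: match t with CLeaf _ => [::] | CNode _ l r => subtrees l ++ subtrees r end.

Definition descendants (t : ctree) : seq ctree := behead (subtrees t).

Fixpoint memP (x : ctree) (s : seq ctree) : Prop :=
  match s with [::] => False | y :: s' => x = y \/ memP x s' end.

Definition dflt : ctree := CLeaf set0.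

(* Augmented tree of a leaf reached by path p (true = left child).
   acc is the augmented subtree whose cluster is M \ C_t. *)
Fixpoint aug_from (acc t : ctree) (p : seq bool) : option ctree :=
  match t, p with
  | CLeaf _, [::] => Some acc
  | CNode _ l r, b :: p' =>
      let a := if b then l else r in
      let sib := if b then r else l in
      aug_from (CNode (~: clus a) sib acc) a p'
  | _, _ => None
  end.

(* T_r^+ for the leaf of t at path p; the root C_{-a_{d-1}} is identified
   with the sibling subtree C_{b_{d-1}}.  None if p does not lead to a leaf
   or the leaf is the root (d = 0). *)
Definition aug_tree (t : ctree) (p : seq bool) : option ctree :=
  match t, p with
  | CNode _ l r, b :: p' => aug_from (if b then r else l) (if b then l else r) p'
  | _, _ => None
  end.

Definition consistent_ordering (Tr : ctree) (ord : seq ctree) : Prop :=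
  (forall x, memP x ord <-> memP x (subtrees Tr)) /\
  (forall i j, (i < size ord)%N -> (j < size ord)%N ->
     nth dflt ord i = nth dflt ord j -> i = j) /\
  (forall k, (k < size ord)%N -> forall y, memP y (descendants (nth dflt ord k)) ->
     exists2 k', (k' < k)%N & nth dflt ord k' = y).

Variable A : 'M[C]_n.

Definition boundary (X : {set node}) : {set node} :=
  [set i in X | [exists j, (j \notin X) && (A i j != 0)]].
Definition inner (X : {set node}) : {set node} := X :\: boundary X.

Definition priv (g : ctree) : {set node} :=
  match g with
  | CLeaf X => inner X
  | CNode X l r => inner X :\: (inner (clus l) :|: inner (clus r))
  end.

(* selection matrix of a set S: sel S *m M *m (sel S)^T = M(S,S) *)
Definition sel (S : {set node}) : 'M[C]_(#|S|, n) :=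
  \matrix_(k < #|S|, j < n) ((enum_val k == j)%:R).
Definition subM (M : 'M[C]_n) (S : {set node}) : 'M[C]_#|S| :=
  sel S *m M *m (sel S)^T.
Definition proj (B : {set node}) : 'M[C]_n := diag_mx (\row_j ((j \in B)%:R)).

Definition ctrmx (M : 'M[C]_n) : 'M[C]_n := (map_mx (fun x => x^*) M)^T.

(* L_g: identity except L_g(B_g,S_g) = M(B_g,S_g) M(S_g,S_g)^{-1} *)
Definition Lmat (M : 'M[C]_n) (g : ctree) : 'M[C]_n :=
  let S := priv g in let B := boundary (clus g) in
  1%:M + proj B *m M *m (sel S)^T *m invmx (subM M S) *m sel S.

Definition elim_step (AS : 'M[C]_n * 'M[C]_n) (g : ctree) : 'M[C]_n * 'M[C]_n :=
  let Li := invmx (Lmat AS.1 g) in (Li *m AS.1, Li *m AS.2 *m ctrmx Li).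

(* (A_{r,g_{k+1}}, Sigma_{r,g_{k+1}}): matrices just before eliminating the
   k-th node (0-based) of the ordering *)
Definition elim_before (Sig : 'M[C]_n) (ord : seq ctree) (k : nat) :=
  foldl elim_step (A, Sig) (take k ord).

End FIND.

From HB Require Import structures.
From mathcomp Require Import all_boot all_order all_algebra.
Set Implicit Arguments. Unset Strict Implicit. Unset Printing Implicit Defensive.
Import GRing.Theory Num.Theory.
Local Open Scope ring_scope.

(* Before S_i is eliminated, the C_i x C_i blocks of A and Sigma depend only on
   the eliminations already performed inside C_i.  Indeed L_g^-1 = 1 - E_g, where
   E_g is supported on rows B_g and columns S_g (both inside C_g) and computed from
   the C_g-block alone; hence an elimination with C_g inside C_i updates the C_i-block
   through a function of that block, and one with C_g disjoint from C_i does not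
   touch it.  In a consistent ordering every node eliminated before i is of one of
   these two kinds, and those of the first kind are exactly the descendants of i,
   which are the same in both augmented trees.  Both orderings eliminate them
   descendants first, and eliminations on disjoint clusters commute, so the two
   orderings yield the same C_i-block; it contains S_i u B_i. *)

Section Projections.
Variables (C : numClosedFieldType) (n : nat).
Implicit Types (X Y S : {set 'I_n}) (M : 'M[C]_n).
Local Notation PX := (proj C).

Definition block X M := PX X *m M *m PX X.

Lemma projM X Y : PX X *m PX Y = PX (X :&: Y).
Proof.
rewrite /proj mulmx_diag; congr diag_mx; apply/rowP => j; rewrite !mxE inE.
by case: (j \in X); case: (j \in Y); rewrite /= ?mulr1 ?mulr0.
Qed.

Lemma proj_set0 : PX (set0 : {set 'I_n}) = 0.
Proof. by apply/matrixP => i j; rewrite !mxE inE mul0rn. Qed.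

Lemma projM_subl X Y : X \subset Y -> PX X *m PX Y = PX X.
Proof. by move=> sXY; rewrite projM (setIidPl sXY). Qed.

Lemma projM_subr X Y : X \subset Y -> PX Y *m PX X = PX X.
Proof. by move=> sXY; rewrite projM (setIidPr sXY). Qed.

Lemma projM_disjoint X Y : [disjoint X & Y] -> PX X *m PX Y = 0.
Proof. by move=> dXY; rewrite projM (disjoint_setI0 dXY) proj_set0. Qed.

Lemma projMid X : PX X *m PX X = PX X.
Proof. exact: projM_subl. Qed.

Lemma sel_proj S X : S \subset X -> sel C S *m PX X = sel C S.
Proof.
move=> sSX; rewrite /proj mul_mx_diag; apply/matrixP => k j; rewrite !mxE.
case: eqP => [<-|_]; last by rewrite mul0r.
by rewrite (subsetP sSX _ (enum_valP k)) mulr1.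
Qed.

Lemma sel_proj_disjoint S X : [disjoint S & X] -> sel C S *m PX X = 0.
Proof.
move=> dSX; rewrite /proj mul_mx_diag; apply/matrixP => k j; rewrite !mxE.
case: eqP => [<-|_]; last by rewrite mul0r.
by rewrite (disjointFr dSX (enum_valP k)) mulr0.
Qed.

Lemma proj_trsel S X : S \subset X -> PX X *m (sel C S)^T = (sel C S)^T.
Proof. by move=> sSX; rewrite -[PX X]tr_diag_mx -trmx_mul sel_proj. Qed.

Lemma ctrmxM M (N : 'M[C]_n) : ctrmx (M *m N) = ctrmx N *m ctrmx M.
Proof. by rewrite /ctrmx map_mxM trmx_mul. Qed.

Lemma ctrmx_proj X : ctrmx (PX X) = PX X.
Proof.
apply/matrixP => i j; rewrite /ctrmx /proj !mxE eq_sym.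
by case: eqP => [->|_]; rewrite ?mulr1n ?mulr0n ?conjC_nat ?conjC0.
Qed.

Lemma block_entry X M x y : x \in X -> y \in X -> block X M x y = M x y.
Proof.
move=> Xx Xy; rewrite /block /proj mul_mx_diag mxE mul_diag_mx !mxE Xx Xy.
by rewrite mul1r mulr1.
Qed.

Lemma block_mul_conj X (L K M : 'M[C]_n) : PX X *m L = K -> L *m PX X = K ->
  block X (L *m M) = K *m block X M /\
  block X (L *m M *m ctrmx L) = K *m block X M *m ctrmx K.
Proof.
move=> XL LX; have KX : K *m PX X = K by rewrite -LX -mulmxA projMid.
have LcX : ctrmx L *m PX X = ctrmx K by rewrite -[in LHS](ctrmx_proj X) -ctrmxM XL.
have XKc : PX X *m ctrmx K = ctrmx K by rewrite -{2}KX ctrmxM ctrmx_proj.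
have KMK : K *m block X M *m ctrmx K = K *m M *m ctrmx K.
  by rewrite /block !mulmxA KX -mulmxA XKc.
rewrite KMK /block; split; first by rewrite mulmxA XL -{1}KX !mulmxA.
by rewrite !mulmxA XL -!mulmxA LcX.
Qed.

Definition same_block X (s s' : 'M[C]_n * 'M[C]_n) :=
  block X s.1 = block X s'.1 /\ block X s.2 = block X s'.2.

Lemma same_block_refl X s : same_block X s s.
Proof. by []. Qed.

Lemma same_block_sym X s s' : same_block X s s' -> same_block X s' s.
Proof. by case. Qed.

Lemma same_block_trans X s1 s2 s3 :
  same_block X s1 s2 -> same_block X s2 s3 -> same_block X s1 s3.
Proof. by move=> [e1 e2] [f1 f2]; split; [rewrite e1 | rewrite e2]. Qed.

End Projections.

Section EliminationStep.
Variables (C : numClosedFieldType) (n : nat) (A : 'M[C]_n).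
Implicit Types (X : {set 'I_n}) (M : 'M[C]_n) (g h : ctree n).
Local Notation PX := (proj C).
Local Notation step := (elim_step A).

(* [Lmat A M g] is [1%:M + Lcorr M g]. *)
Definition Lcorr M g : 'M[C]_n :=
  PX (boundary A (clus g)) *m M *m (sel C (priv A g))^T
     *m invmx (subM M (priv A g)) *m sel C (priv A g).

Lemma boundary_sub X : boundary A X \subset X.
Proof. by apply/subsetP => x; rewrite inE => /andP[]. Qed.

Lemma priv_sub_inner g : priv A g \subset inner A (clus g).
Proof. by case: g => [X|X l r] //=; apply: subsetDl. Qed.

Lemma priv_sub g : priv A g \subset clus g.
Proof. exact: subset_trans (priv_sub_inner g) (subsetDl _ _). Qed.

Lemma priv_boundary_disjoint g : [disjoint priv A g & boundary A (clus g)].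
Proof.
apply: disjointWl (priv_sub_inner g) _.
by rewrite /inner disjoints_subset setDE subsetIr.
Qed.

Lemma Lcorr_mul_disjoint M M' g h : [disjoint priv A g & boundary A (clus h)] ->
  Lcorr M g *m Lcorr M' h = 0.
Proof.
move=> dgh; rewrite [Lcorr M' h]/Lcorr -!(mulmxA (PX _)) mulmxA.
by rewrite -(mulmxA _ (sel C (priv A g))) sel_proj_disjoint // mulmx0 mul0mx.
Qed.

(* [Lcorr M g] squares to zero since [S_g] and [B_g] are disjoint, so [L_g] is
   inverted by flipping the sign of its off-diagonal part. *)
Lemma invLmat M g : invmx (Lmat A M g) = 1%:M - Lcorr M g.
Proof.
have LgK : Lmat A M g *m (1%:M - Lcorr M g) = 1%:M.
  rewrite /Lmat -/(Lcorr M g) mulmxDl mul1mx mulmxBr mulmx1.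
  by rewrite Lcorr_mul_disjoint ?priv_boundary_disjoint // subr0 subrK.
have [Lg_unit _] := mulmx1_unit LgK.
by rewrite -[invmx _]mulmx1 -{1}LgK mulmxA mulVmx // mul1mx.
Qed.

Lemma elim_stepE s g : let E := Lcorr s.1 g in
  step s g = ((1%:M - E) *m s.1, (1%:M - E) *m s.2 *m ctrmx (1%:M - E)).
Proof. by rewrite /elim_step /= invLmat. Qed.

Lemma Lcorr_block M g X : clus g \subset X -> Lcorr M g = Lcorr (block X M) g.
Proof.
move=> sgX.
have sBX : boundary A (clus g) \subset X := subset_trans (boundary_sub _) sgX.
have sSX : priv A g \subset X := subset_trans (priv_sub g) sgX.
rewrite /Lcorr /block /subM !mulmxA projM_subl // sel_proj //.
by rewrite -!(mulmxA _ (PX X) (sel C _)^T) proj_trsel.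
Qed.

Lemma proj_Lcorr_sub M g X : clus g \subset X ->
  PX X *m Lcorr M g = Lcorr M g /\ Lcorr M g *m PX X = Lcorr M g.
Proof.
move=> sgX; split; last by rewrite -mulmxA sel_proj // (subset_trans (priv_sub g)).
by rewrite !mulmxA projM_subr // (subset_trans (boundary_sub _)).
Qed.

Lemma proj_Lcorr_disjoint M g X : [disjoint clus g & X] ->
  PX X *m Lcorr M g = 0 /\ Lcorr M g *m PX X = 0.
Proof.
move=> dgX; split.
  rewrite !mulmxA projM_disjoint ?mul0mx //.
  by rewrite disjoint_sym (disjointWl (boundary_sub _) dgX).
by rewrite -mulmxA sel_proj_disjoint ?mulmx0 // (disjointWl (priv_sub g) dgX).
Qed.

Lemma elim_step_block_sub X g s s' : clus g \subset X -> same_block X s s' ->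
  same_block X (step s g) (step s' g).
Proof.
move=> sgX [e1 e2]; rewrite !elim_stepE /=.
have projL M : PX X *m (1%:M - Lcorr M g) = PX X - Lcorr M g /\
               (1%:M - Lcorr M g) *m PX X = PX X - Lcorr M g.
  have [XE EX] := proj_Lcorr_sub M sgX.
  by rewrite mulmxBr mulmxBl mulmx1 mul1mx XE EX.
have sameE : Lcorr s.1 g = Lcorr s'.1 g by rewrite (Lcorr_block _ sgX) e1 -Lcorr_block.
have [XL LX] := projL s.1; have [XL' LX'] := projL s'.1.
have [b1 _] := block_mul_conj s.1 XL LX; have [_ b2] := block_mul_conj s.2 XL LX.
have [b1' _] := block_mul_conj s'.1 XL' LX'; have [_ b2'] := block_mul_conj s'.2 XL' LX'.
by split; rewrite ?b1 ?b1' ?b2 ?b2' sameE ?e1 ?e2.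
Qed.

Lemma elim_step_block_disjoint X g s : [disjoint clus g & X] ->
  same_block X (step s g) s.
Proof.
move=> dgX; rewrite elim_stepE /=.
have [XE EX] := proj_Lcorr_disjoint s.1 dgX.
have XL : PX X *m (1%:M - Lcorr s.1 g) = PX X by rewrite mulmxBr mulmx1 XE subr0.
have LX : (1%:M - Lcorr s.1 g) *m PX X = PX X by rewrite mulmxBl mul1mx EX subr0.
have [b1 _] := block_mul_conj s.1 XL LX; have [_ b2] := block_mul_conj s.2 XL LX.
rewrite /same_block b1 b2 ctrmx_proj /block !mulmxA projMid.
by rewrite -!mulmxA projMid.
Qed.

Lemma elim_step_comm g h s : [disjoint clus g & clus h] ->
  step (step s g) h = step (step s h) g.
Proof.
move=> dgh; have dhg := dgh; rewrite disjoint_sym in dhg.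
have Eh : Lcorr (step s g).1 h = Lcorr s.1 h.
  have [e _] := elim_step_block_disjoint s dgh.
  by rewrite (Lcorr_block _ (subxx (clus h))) e -Lcorr_block.
have Eg : Lcorr (step s h).1 g = Lcorr s.1 g.
  have [e _] := elim_step_block_disjoint s dhg.
  by rewrite (Lcorr_block _ (subxx (clus g))) e -Lcorr_block.
have Lcomm : (1%:M - Lcorr s.1 h) *m (1%:M - Lcorr s.1 g)
           = (1%:M - Lcorr s.1 g) *m (1%:M - Lcorr s.1 h).
  rewrite !mulmxBl !mul1mx !mulmxBr !mulmx1 !Lcorr_mul_disjoint ?subr0 1?addrAC //.
    exact: disjointW (priv_sub g) (boundary_sub _) dgh.
  exact: disjointW (priv_sub h) (boundary_sub _) dhg.
rewrite [step (step s g) h]elim_stepE [step (step s h) g]elim_stepE Eh Eg.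
rewrite !elim_stepE /=; congr pair; first by rewrite !mulmxA Lcomm.
by rewrite !mulmxA -!mulmxA -!ctrmxM !mulmxA Lcomm.
Qed.

End EliminationStep.

Lemma setC_disjointU (T : finType) (X Y : {set T}) :
  [disjoint X & Y] -> ~: X = Y :|: ~: (X :|: Y).
Proof.
move=> dXY; apply/setP => x; rewrite !inE.
by case: (boolP (x \in X)) => xX /=; [rewrite (disjointFr dXY xX) | case: (x \in Y)].
Qed.

Fixpoint ctree_eqb n (a b : ctree n) : bool :=
  match a, b with
  | CLeaf X, CLeaf Y => X == Y
  | CNode X l r, CNode Y l' r' => [&& X == Y, ctree_eqb l l' & ctree_eqb r r']
  | _, _ => false
  end.

Lemma ctree_eqP n : Equality.axiom (@ctree_eqb n).
Proof.
elim=> [X|X l IHl r IHr] [Y|Y l' r'] /=; try by constructor.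
  by apply: (iffP eqP) => [->|[]].
case: eqP => [->|ne]; last by constructor => [[]].
case: (IHl l') => [->|ne]; last by constructor => [[]].
case: (IHr r') => [->|ne]; last by constructor => [[]].
by constructor.
Qed.

HB.instance Definition _ n := hasDecEq.Build (ctree n) (@ctree_eqP n).

Section ClusterTrees.
Variable n : nat.
Implicit Types (s : seq (ctree n)) (t a b : ctree n).

Lemma memPE (x : ctree n) s : memP x s <-> x \in s.
Proof.
elim: s => [|y s IH] //=; rewrite in_cons; split.
  by case=> [->|/IH ->]; rewrite ?eqxx ?orbT.
by case/orP=> [/eqP ->|/IH]; [left|right].
Qed.

Definition desc a b := a \in descendants b.

Lemma desc_subtree a b : desc a b -> a \in subtrees b.
Proof. exact: mem_behead. Qed.

Lemma wf_subtree t a : wf_ctree t -> a \in subtrees t -> wf_ctree a.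
Proof.
elim: t => [X|X l IHl r IHr] /=; first by rewrite inE => ? /eqP ->.
move=> /[dup] wt /and4P[_ _ wl wr]; rewrite inE mem_cat.
by case/or3P => [/eqP ->|/(IHl wl)|/(IHr wr)].
Qed.

Lemma clus_subtree t a : wf_ctree t -> a \in subtrees t -> clus a \subset clus t.
Proof.
elim: t => [X|X l IHl r IHr] /=; first by rewrite inE => ? /eqP ->.
move=> /and4P[/eqP eX _ wl wr]; rewrite inE mem_cat eX.
case/or3P => [/eqP ->|/(IHl wl) h|/(IHr wr) h]; first exact: subxx.
  exact: subset_trans h (subsetUl _ _).
exact: subset_trans h (subsetUr _ _).
Qed.

Lemma clus_desc a b : wf_ctree b -> desc a b -> clus a \subset clus b.
Proof. by move=> wb /desc_subtree; apply: clus_subtree. Qed.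

Lemma wf_clus_neq0 t : wf_ctree t -> clus t != set0.
Proof.
elim: t => [X|X l IHl r IHr] //= /and4P[/eqP eX _ wl _].
apply: contraNneq (IHl wl) => e.
by rewrite -subset0 -e eX subsetUl.
Qed.

Lemma subtrees_nested_or_disjoint t a b : wf_ctree t ->
  a \in subtrees t -> b \in subtrees t ->
  [\/ a = b, desc a b, desc b a | [disjoint clus a & clus b]].
Proof.
elim: t => [X|X l IHl r IHr] /=.
  by move=> _; rewrite !inE => /eqP -> /eqP ->; constructor 1.
move=> /and4P[_ dlr wl wr]; rewrite !inE !mem_cat.
have desc_root x : (x \in subtrees l) || (x \in subtrees r) -> desc x (CNode X l r).
  by rewrite /desc /descendants /= mem_cat.
case/orP=> [/eqP ->|ha]; case/orP=> [/eqP ->|hb].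
- by constructor 1.
- by constructor 3; apply: desc_root.
- by constructor 2; apply: desc_root.
case/orP: ha => ha; case/orP: hb => hb.
- exact: IHl.
- by constructor 4; apply: disjointW (clus_subtree wl ha) (clus_subtree wr hb) dlr.
- constructor 4; rewrite disjoint_sym in dlr.
  exact: disjointW (clus_subtree wr ha) (clus_subtree wl hb) dlr.
- exact: IHr.
Qed.

Lemma wf_compl_node a sib acc : [disjoint clus a & clus sib] ->
  wf_ctree sib -> wf_ctree acc -> clus acc = ~: (clus a :|: clus sib) ->
  wf_ctree (CNode (~: clus a) sib acc).
Proof.
move=> dis wsib wacc eacc /=; rewrite wsib wacc eacc (setC_disjointU dis) eqxx.
by rewrite disjoints_subset setCK subsetUr.
Qed.

Lemma wf_aug_from acc t p Tr : wf_ctree t -> wf_ctree acc ->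
  clus acc = ~: clus t -> aug_from acc t p = Some Tr -> wf_ctree Tr.
Proof.
elim: t acc p => [X|X l IHl r IHr] acc [|b p'] //=; first by move=> _ wa _ [<-].
move=> /and4P[/eqP eX dlr wl wr] wacc eacc.
case: b; [apply: IHl | apply: IHr] => //; apply: wf_compl_node => //.
- by rewrite -eX.
- by rewrite disjoint_sym.
- by rewrite setUC -eX.
Qed.

Lemma wf_aug_tree T p Tr : wf_ctree T -> clus T = [set: 'I_n] ->
  aug_tree T p = Some Tr -> wf_ctree Tr.
Proof.
case: T => [X|X l r] //; case: p => [|b p'] //= /and4P[/eqP -> dlr wl wr] eT.
have drl := dlr; rewrite disjoint_sym in drl.
case: b; apply: wf_aug_from => //.
- by rewrite (setC_disjointU dlr) eT setCT setU0.
- by rewrite (setC_disjointU drl) [clus r :|: _]setUC eT setCT setU0.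
Qed.

End ClusterTrees.

Section FoldlReorder.
Variables (S : Type) (T : eqType) (f : S -> T -> S) (prec : rel T).
Local Notation respects s := (pairwise (fun a b => ~~ prec b a) s).

Lemma foldl_commute_last h u x : {in u, forall a y, f (f y h) a = f (f y a) h} ->
  foldl f (f x h) u = f (foldl f x u) h.
Proof.
elim: u x => [|a u IH] x //= hu.
rewrite hu ?mem_head // IH // => b bu.
by apply: hu; rewrite in_cons bu orbT.
Qed.

(* Two enumerations of the same steps that both respect [prec] differ only by
   swaps of [prec]-unrelated steps, which are assumed to commute. *)
Lemma foldl_reorder s1 s2 x : perm_eq s1 s2 -> uniq s1 -> respects s1 -> respects s2 ->
  {in s1 &, forall a b, a != b -> ~~ prec a b -> ~~ prec b a ->
     forall y, f (f y a) b = f (f y b) a} ->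
  foldl f x s1 = foldl f x s2.
Proof.
elim: s1 s2 x => [|h t IH] s2 x; first by move=> /perm_size; case: s2.
move=> pe /andP[ht ut] p1 p2 fcomm.
have h_s2 : h \in s2 by rewrite -(perm_mem pe) mem_head.
move: p2 pe; case/splitPr: h_s2 => u v p2 pe.
have uniq2 : uniq (u ++ h :: v) by rewrite -(perm_uniq pe) /= ht.
have hu : {in u, forall a y, f (f y h) a = f (f y a) h}.
  move=> a au y.
  have a_ht : a \in h :: t by rewrite (perm_mem pe) mem_cat au.
  have ah : a != h.
    apply/eqP => e; move: uniq2; rewrite cat_uniq => /and3P[_ + _].
    by rewrite /= -e au.
  have at' : a \in t by move: a_ht; rewrite in_cons (negPf ah).
  apply: fcomm; rewrite 1?eq_sym ?mem_head //.
    move: p2; rewrite pairwise_cat => /and3P[/allrelP/(_ a h au) + _ _].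
    by apply; rewrite mem_head.
  by move: p1; rewrite pairwise_cons => /andP[/allP/(_ a at')].
rewrite foldl_cat /= -foldl_commute_last // -foldl_cat.
apply: IH => //.
- by rewrite -(perm_cons h) (perm_trans pe) // -[h :: v]cat1s perm_catCA.
- by move: p1; rewrite pairwise_cons => /andP[].
- apply: subseq_pairwise p2; exact: cat_subseq (subseq_refl u) (subseq_cons v h).
- by move=> a b at' bt; apply: fcomm; rewrite in_cons ?at' ?bt orbT.
Qed.

End FoldlReorder.

Definition below n (X : {set 'I_n}) (s : seq (ctree n)) :=
  [seq g <- s | clus g \subset X].

Section ConsistentOrdering.
Variables (n : nat) (Tr : ctree n) (ord : seq (ctree n)).
Hypotheses (wTr : wf_ctree Tr) (cord : consistent_ordering Tr ord).
Local Notation nth_ord := (nth (dflt n) ord).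

Lemma mem_ordering g : (g \in ord) = (g \in subtrees Tr).
Proof. by case: cord => memo _; apply/idP/idP => /memPE/memo/memPE. Qed.

Lemma ordering_uniq : uniq ord.
Proof. by case: cord => _ [inj _]; apply/(uniqP (dflt n)) => a b; apply: inj. Qed.

Lemma ordering_nth_inj j k : (j < size ord)%N -> (k < size ord)%N ->
  nth_ord j = nth_ord k -> j = k.
Proof. by case: cord => _ [inj _]; apply: inj. Qed.

Lemma ordering_desc_before k g : (k < size ord)%N -> desc g (nth_ord k) ->
  exists2 j, (j < k)%N & nth_ord j = g.
Proof. by case: cord => _ [_ before] kord /memPE; apply: before. Qed.

Lemma ordering_respects_desc : pairwise (fun a b => ~~ desc b a) ord.
Proof.
apply/(pairwiseP (dflt n)) => a b aord bord ab; apply/negP.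
case/(ordering_desc_before aord) => j ja /(ordering_nth_inj (ltn_trans ja aord) bord) ej.
by move: (ltn_trans ja ab); rewrite ej ltnn.
Qed.

Lemma below_take_uniq X k : uniq (below X (take k ord)).
Proof. exact/filter_uniq/take_uniq/ordering_uniq. Qed.

Lemma below_take_respects_desc X k :
  pairwise (fun a b => ~~ desc b a) (below X (take k ord)).
Proof.
apply/pairwise_filter/(subseq_pairwise (take_subseq ord k)).
exact: ordering_respects_desc.
Qed.

Variables (k : nat) (i : ctree n).
Hypotheses (kord : (k < size ord)%N) (ik : nth_ord k = i).

Lemma ordering_nth_subtree : i \in subtrees Tr.
Proof. by rewrite -mem_ordering -ik mem_nth. Qed.

(* Consistency forbids the remaining case: [i] a descendant of an earlier node. *)
Lemma before_desc_or_disjoint g : g \in take k ord ->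
  desc g i || [disjoint clus g & clus i].
Proof.
move=> gk; have kg : (index g (take k ord) < k)%N.
  by move: gk; rewrite -index_mem size_take_min leq_min => /andP[].
have gord : g = nth_ord (index g (take k ord)) by rewrite -(nth_take _ kg) nth_index.
have g_ord : g \in subtrees Tr by rewrite -mem_ordering gord mem_nth // (ltn_trans kg).
case: (subtrees_nested_or_disjoint wTr g_ord ordering_nth_subtree) => [eg|->|dig|->];
  rewrite ?orbT //.
- have := ordering_nth_inj (ltn_trans kg kord) kord (etrans (esym gord) (etrans eg (esym ik))).
  by move=> ejk; move: kg; rewrite ejk ltnn.
- have dij : desc i (nth_ord (index g (take k ord))) by rewrite -gord.
  have [j jg ej] := ordering_desc_before (ltn_trans kg kord) dij.
  have := ordering_nth_inj (ltn_trans jg (ltn_trans kg kord)) kord (etrans ej (esym ik)).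
  by move=> ejk; move: (ltn_trans jg kg); rewrite ejk ltnn.
Qed.

Lemma below_take_desc : below (clus i) (take k ord) =i descendants i.
Proof.
have wi := wf_subtree wTr ordering_nth_subtree.
move=> g; rewrite mem_filter; apply/andP/idP => [[sgi gk]|dgi].
  case/orP: (before_desc_or_disjoint gk) => // dgi.
  have g_ord : g \in subtrees Tr by rewrite -mem_ordering (mem_take gk).
  have := wf_clus_neq0 (wf_subtree wTr g_ord).
  by rewrite -(setIidPl sgi) (disjoint_setI0 dgi) eqxx.
split; first exact: clus_desc wi dgi.
have dgk : desc g (nth_ord k) by rewrite ik.
have [j jk <-] := ordering_desc_before kord dgk.
by rewrite -(nth_take _ jk) mem_nth // size_take_min leq_min jk (ltn_trans jk kord).
Qed.

End ConsistentOrdering.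

Section EliminationOrder.
Variables (C : numClosedFieldType) (n : nat) (A : 'M[C]_n).
Local Notation step := (elim_step A).

Lemma foldl_elim_block (X : {set 'I_n}) s st st' :
  all (fun g => (clus g \subset X) || [disjoint clus g & X]) s ->
  same_block X st st' -> same_block X (foldl step st s) (foldl step st' (below X s)).
Proof.
elim: s st st' => [|g s IH] st st' //= /andP[gX sX] stst'.
rewrite /below /=; case: ifP => sgX /=; first exact: IH sX (elim_step_block_sub A sgX stst').
apply: IH sX (same_block_trans _ stst'); apply: elim_step_block_disjoint.
by rewrite sgX in gX.
Qed.

Lemma foldl_elim_descendants i s1 s2 st : wf_ctree i ->
  uniq s1 -> uniq s2 -> s1 =i descendants i -> s2 =i descendants i ->
  pairwise (fun a b => ~~ desc b a) s1 -> pairwise (fun a b => ~~ desc b a) s2 ->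
  foldl step st s1 = foldl step st s2.
Proof.
move=> wi u1 u2 e1 e2 p1 p2; apply: (@foldl_reorder _ _ step (@desc n)) => //.
  by apply: uniq_perm => // g; rewrite e1 e2.
move=> a b /[!e1] /desc_subtree ai /desc_subtree bi ab nab nba y.
case: (subtrees_nested_or_disjoint wi ai bi) => [eab|dab|dba|dis].
- by rewrite eab eqxx in ab.
- by rewrite dab in nab.
- by rewrite dba in nba.
- exact: elim_step_comm.
Qed.

Lemma elim_before_block Sig Tr ord k i : wf_ctree Tr -> consistent_ordering Tr ord ->
  (k < size ord)%N -> nth (dflt n) ord k = i ->
  same_block (clus i) (elim_before A Sig ord k)
             (foldl step (A, Sig) (below (clus i) (take k ord))).
Proof.
move=> wTr cord kord ik; apply: foldl_elim_block (same_block_refl _ _).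
have wi := wf_subtree wTr (ordering_nth_subtree cord kord ik).
apply/allP => g gk; have := before_desc_or_disjoint wTr cord kord ik gk.
by case/orP => [/(clus_desc wi) -> | ->]; rewrite ?orbT.
Qed.

End EliminationOrder.

Theorem theorem4 (C : numClosedFieldType) (n : nat)
  (A Sig : 'M[C]_n) (T : ctree n) (p q : seq bool) (Tr Ts : ctree n)
  (ordr ords : seq (ctree n)) :
  A \in unitmx ->
  (forall i j : 'I_n, (A i j != 0) = (A j i != 0)) ->
  (forall i j : 'I_n, i != j -> A i j = 0 -> Sig i j = 0) ->
  wf_ctree T -> clus T = [set: 'I_n] ->
  aug_tree T p = Some Tr -> aug_tree T q = Some Ts ->
  consistent_ordering Tr ordr -> consistent_ordering Ts ords ->
  (forall k, (k < size ordr)%N ->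
     subM (elim_before A Sig ordr k).1 (priv A (nth (dflt n) ordr k)) \in unitmx) ->
  (forall k, (k < size ords)%N ->
     subM (elim_before A Sig ords k).1 (priv A (nth (dflt n) ords k)) \in unitmx) ->
  forall (i : ctree n) (k1 k2 : nat),
    (k1 < size ordr)%N -> nth (dflt n) ordr k1 = i ->
    (k2 < size ords)%N -> nth (dflt n) ords k2 = i ->
    forall x y : 'I_n,
      x \in priv A i :|: boundary A (clus i) ->
      y \in priv A i :|: boundary A (clus i) ->
      (elim_before A Sig ordr k1).2 x y = (elim_before A Sig ords k2).2 x y.
Proof.
move=> _ _ _ wT eT pTr qTs cordr cords _ _ i k1 k2 k1r ik1 k2s ik2 x y xSB ySB.
have wTr := wf_aug_tree wT eT pTr; have wTs := wf_aug_tree wT eT qTs.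
have wi := wf_subtree wTr (ordering_nth_subtree cordr k1r ik1).
have same_desc : foldl (elim_step A) (A, Sig) (below (clus i) (take k1 ordr))
               = foldl (elim_step A) (A, Sig) (below (clus i) (take k2 ords)).
  apply: (foldl_elim_descendants A _ wi);
    rewrite ?(below_take_uniq cordr) ?(below_take_uniq cords)
            ?(below_take_respects_desc cordr) ?(below_take_respects_desc cords) //.
  - exact: (below_take_desc wTr cordr k1r ik1).
  - exact: (below_take_desc wTs cords k2s ik2).
have e1 := elim_before_block A Sig wTr cordr k1r ik1.
have e2 := elim_before_block A Sig wTs cords k2s ik2.
rewrite same_desc in e1; have [_ e] := same_block_trans e1 (same_block_sym e2).
have SB_i : priv A i :|: boundary A (clus i) \subset clus i.
  by rewrite subUset priv_sub boundary_sub.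
by move/(congr1 (fun M : 'M[C]_n => M x y)): e; rewrite !block_entry ?(subsetP SB_i).
Qed.
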